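(* Let $G$ be a connected graph containing two adjacent vertices $v_0,v_1$ such that the distance in $G$ from $v_0$ to every other vertex of $G$ is less than $\mathrm{diam}(G)$. Let $G'$ be obtained from $G$ by adding new vertices $v_2,v_3,\dots,v_n$ and the edges $v_1v_2, v_2v_3,\dots,v_{n-1}v_n$ and $v_0v_2, v_0v_3,\dots,v_0v_n$. Then $\mathrm{diam}(G')=\mathrm{diam}(G)$.
   Context: $\mathrm{diam}(G)$ denotes the diameter of a connected graph $G$, the maximum distance between two of its vertices. The vertices $v_2,\dots,v_n$ are new vertices not in $G$. *)

From mathcomp Require Import all_boot all_order.
Set Implicit Arguments. Unset Strict Implicit. Unset Printing Implicit Defensive.

Section Graphs.
Variable T : finType.
Implicit Types (e : rel T) (x y : T).

Definition simple_graph e := symmetric e /\ irreflexive e.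
Definition connected_graph e := forall x y, connect e x y.

Definition walkb e x y (k : nat) : bool :=
  [exists p : k.-tuple T, path e x p && (last x p == y)].

(* graph distance: least length of a walk from x to y (lengths < #|T|
   suffice in a connected graph); defaults to #|T| if unreachable *)
Definition dist e x y : nat :=
  \big[minn/#|T|]_(k < #|T| | walkb e x y k) (k : nat).

Definition diam e : nat := \max_(x : T) \max_(y : T) dist e x y.
End Graphs.

(* G' : vertex set T + 'I_m, where the new vertex k : 'I_m is v_(k+2)
   (so m = n - 1 new vertices v_2, ..., v_n). Edges: those of G,
   v1 v2, v_j v_(j+1) (2 <= j < n), and v0 v_j (2 <= j <= n). *)
Definition ext_adj (T : finType) (e : rel T) (v0 v1 : T) (m : nat)
  (a b : T + 'I_m) : bool :=
  match a, b with
  | inl x, inl y => e x y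
  | inl x, inr k => ((x == v1) && (val k == 0)) || (x == v0)
  | inr k, inl x => ((x == v1) && (val k == 0)) || (x == v0)
  | inr k, inr l => (val l == (val k).+1) || (val k == (val l).+1)
  end.
Arguments ext_adj {T} e v0 v1 m a b.

(* Old vertices keep their distances in G': a walk of G is a walk of G', and
   collapsing every new vertex onto v0 turns a walk of G' into a walk of G that
   is no longer (an edge v_i v_j or v0 v_i becomes a stay at v0, and v1 v2
   becomes the edge v1 v0).  Hence diam G <= diam G'.  Conversely every new
   vertex is adjacent to v0, so it lies within 1 + d(v0, y) < 1 + diam G of an
   old vertex y and within 2 of another new vertex, and diam G >= 2 because
   0 < d(v0, v1) < diam G. *)
From mathcomp Require Import all_boot all_order.
Set Implicit Arguments. Unset Strict Implicit. Unset Printing Implicit Defensive.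
Import Order.TTheory.

Section Walks.
Variable T : finType.
Implicit Types (r : rel T) (x y z : T).

Lemma walkbP r x y k :
  reflect (exists p : seq T, [/\ size p = k, path r x p & last x p = y])
          (walkb r x y k).
Proof.
apply: (iffP existsP) =>
    [[p /andP[p_path /eqP p_last]] | [p [p_size p_path p_last]]].
  by exists (val p); rewrite size_tuple.
have p_size' : size p == k by rewrite p_size.
by exists (Tuple p_size'); rewrite /= p_path p_last eqxx.
Qed.

Lemma walkb0 r x : walkb r x x 0.
Proof. by apply/walkbP; exists [::]. Qed.

Lemma walkb1 r x y : r x y -> walkb r x y 1.
Proof. by move=> rxy; apply/walkbP; exists [:: y]; rewrite /= rxy. Qed.

Lemma walkb_cat r x y z a b :
  walkb r x y a -> walkb r y z b -> walkb r x z (a + b).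
Proof.
move=> /walkbP[p [<- p_path p_last]] /walkbP[q [<- q_path q_last]].
apply/walkbP; exists (p ++ q).
by rewrite size_cat cat_path last_cat p_last p_path q_path.
Qed.

Lemma walkb_sym r x y k : symmetric r -> walkb r x y k = walkb r y x k.
Proof.
suff walkb_rev a b : symmetric r -> walkb r a b k -> walkb r b a k.
  by move=> r_sym; apply/idP/idP; apply: walkb_rev.
move=> r_sym /walkbP[[|c p] [p_size p_path p_last]]; apply/walkbP.
  by exists [::]; rewrite -p_last.
exists (rev (belast a (c :: p))); split.
- by rewrite size_rev size_belast.
- by rewrite -p_last rev_path; apply: sub_path p_path => u v /=; rewrite r_sym.
- by rewrite /= rev_cons last_rcons.
Qed.

Lemma dist_le_card r x y : dist r x y <= #|T|.
Proof. by rewrite /dist -minEnat -leEnat bigmin_le_id. Qed.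

Lemma dist_le r x y k : walkb r x y k -> dist r x y <= k.
Proof.
move=> walk_k; have [k_lt | k_ge] := ltnP k #|T|.
  by rewrite /dist -minEnat -leEnat (bigmin_le_cond _ (j := Ordinal k_lt)).
exact: leq_trans (dist_le_card r x y) k_ge.
Qed.

Lemma walkb_dist r x y : dist r x y < #|T| -> walkb r x y (dist r x y).
Proof.
have : (dist r x y == #|T|) || walkb r x y (dist r x y).
  apply: (big_ind (fun d => (d == #|T|) || walkb r x y d)) => //.
  - by rewrite eqxx.
  - by move=> a b a_ok b_ok; rewrite /minn; case: ifP.
  - by move=> i ->; rewrite orbT.
by case/orP => [/eqP -> | //]; rewrite ltnn.
Qed.

Lemma dist_lt_card r x y : connect r x y -> dist r x y < #|T|.
Proof.
case/connectP => p p_path ->; case/shortenP: p_path => q q_path q_uniq _.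
apply: (@leq_ltn_trans (size q)).
  by apply: dist_le; apply/walkbP; exists q.
by move/card_uniqP: q_uniq => /= <-; apply: max_card.
Qed.

Lemma distxx r x : dist r x x = 0.
Proof. by apply/eqP; rewrite -leqn0 dist_le ?walkb0. Qed.

Lemma dist_eq0 r x y : (dist r x y == 0) = (x == y).
Proof.
apply/idP/eqP => [/eqP dist0 | <-]; last by rewrite distxx.
have /walkb_dist : dist r x y < #|T| by rewrite dist0; apply/card_gt0P; exists x.
by rewrite dist0 => /walkbP[p [/size0nil -> _ <-]].
Qed.

Lemma dist_sym r x y : symmetric r -> dist r x y = dist r y x.
Proof. by move=> r_sym; apply: eq_bigl => k; rewrite walkb_sym. Qed.

Lemma dist_le_diam r x y : dist r x y <= diam r.
Proof.
exact: leq_trans (leq_bigmax (F := dist r x) y)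
                 (leq_bigmax (F := fun x => \max_y dist r x y) x).
Qed.

Lemma diam_le r d : (forall x y, dist r x y <= d) -> diam r <= d.
Proof. by move=> dist_le_d; do 2 apply/bigmax_leqP => ? _. Qed.

End Walks.

Section Homomorphisms.
Variables (T U : finType) (r : rel T) (s : rel U) (f : T -> U).
Implicit Types (x y : T).

Lemma walkb_hom x y k :
  {homo f : a b / r a b >-> s a b} -> walkb r x y k -> walkb s (f x) (f y) k.
Proof.
move=> f_hom /walkbP[p [p_size p_path p_last]]; apply/walkbP; exists (map f p).
rewrite size_map last_map p_last path_map; split=> //.
by apply: sub_path p_path => a b /f_hom.
Qed.

Lemma dist_lazy_hom x y k :
  (forall a b, r a b -> (f a == f b) || s (f a) (f b)) ->
  walkb r x y k -> dist s (f x) (f y) <= k.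
Proof.
move=> f_lazy /walkbP[p [<- p_path <-]].
suff [k' k'_le /dist_le] : exists2 k', k' <= size p & walkb s (f x) (f (last x p)) k'.
  by move/leq_trans; apply.
elim: p x p_path => [|z p IHp] x /=; first by exists 0; rewrite ?walkb0.
case/andP => /f_lazy/orP[/eqP -> | sfxz] /IHp[k' k'_le walk_k'].
  by exists k'; rewrite // ltnW.
by exists k'.+1; last by rewrite -add1n (walkb_cat (walkb1 sfxz)).
Qed.

End Homomorphisms.

Section Extension.
Variables (T : finType) (e : rel T) (v0 v1 : T) (m : nat).
Hypotheses (e_sym : symmetric e) (e_conn : connected_graph e) (e01 : e v0 v1).
Local Notation E := (ext_adj e v0 v1 m).

Lemma ext_adj_sym : symmetric E.
Proof. by case=> [x|k] [y|l] //=; rewrite ?e_sym // orbC. Qed.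

Lemma ext_adj_v0 k : E (inl v0) (inr k).
Proof. by rewrite /= eqxx orbT. Qed.

Definition ext_proj (a : T + 'I_m) : T := if a is inl x then x else v0.

Lemma ext_proj_lazy a b :
  E a b -> (ext_proj a == ext_proj b) || e (ext_proj a) (ext_proj b).
Proof.
case: a b => [a|i] [b|j] /=; first by move=> ->; rewrite orbT.
- by case/orP => [/andP[/eqP-> _] | /eqP->]; rewrite ?eqxx // e_sym e01 orbT.
- by case/orP => [/andP[/eqP-> _] | /eqP->]; rewrite ?eqxx // e01 orbT.
- by rewrite eqxx.
Qed.

Lemma dist_ext_inl_inl x y : dist E (inl x) (inl y) = dist e x y.
Proof.
have walk_e := walkb_dist (dist_lt_card (e_conn x y)).
have walk_E : walkb E (inl x) (inl y) (dist e x y) by apply: walkb_hom walk_e.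
apply/eqP; rewrite eqn_leq dist_le //=.
apply: (dist_lazy_hom (x := inl x) (y := inl y) ext_proj_lazy).
apply: walkb_dist; apply: leq_ltn_trans (dist_le walk_E) _.
by rewrite card_sum (leq_trans (dist_lt_card (e_conn x y))) ?leq_addr.
Qed.

Lemma dist_ext_inr_inl k y : dist E (inr k) (inl y) <= (dist e v0 y).+1.
Proof.
rewrite (dist_sym _ _ ext_adj_sym) -addn1 dist_le //.
apply: walkb_cat (walkb1 (ext_adj_v0 k)).
rewrite (walkb_sym _ _ _ ext_adj_sym).
by apply: walkb_hom (walkb_dist (dist_lt_card (e_conn v0 y))).
Qed.

Lemma dist_ext_inr_inr k l : dist E (inr k) (inr l) <= 2.
Proof.
apply: dist_le (walkb_cat (walkb1 _) (walkb1 (ext_adj_v0 l))).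
by rewrite ext_adj_sym ext_adj_v0.
Qed.

Lemma diam_ext_le : 1 < diam e -> (forall y, dist e v0 y < diam e) -> diam E <= diam e.
Proof.
move=> diam_gt1 v0_near; apply: diam_le => -[x|k] [y|l].
- by rewrite dist_ext_inl_inl dist_le_diam.
- by rewrite (dist_sym _ _ ext_adj_sym) (leq_trans (dist_ext_inr_inl l x)).
- exact: leq_trans (dist_ext_inr_inl k y) (v0_near y).
- exact: leq_trans (dist_ext_inr_inr k l) diam_gt1.
Qed.

Lemma diam_le_ext : diam e <= diam E.
Proof. by apply: diam_le => x y; rewrite -dist_ext_inl_inl dist_le_diam. Qed.

End Extension.

Theorem theorem3p3 (T : finType) (e : rel T) (v0 v1 : T) (n : nat) :
  simple_graph e -> connected_graph e -> e v0 v1 ->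
  (forall x : T, x != v0 -> dist e v0 x < diam e) ->
  2 <= n ->
  diam (ext_adj e v0 v1 (n - 1)) = diam e.
Proof.
move=> [e_sym e_irr] e_conn e01 v0_far _. (* any number of new vertices works *)
have v10 : v1 != v0 by apply: contraTneq e01 => ->; rewrite e_irr.
have dist01_gt0 : 0 < dist e v0 v1 by rewrite lt0n dist_eq0 eq_sym.
have diam_gt1 : 1 < diam e := leq_ltn_trans dist01_gt0 (v0_far v1 v10).
have v0_near y : dist e v0 y < diam e.
  by have [-> | /v0_far //] := eqVneq y v0; rewrite distxx ltnW.
by apply/eqP; rewrite eqn_leq diam_ext_le ?diam_le_ext.
Qed.
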